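(* Define $f:[0,1]\to\mathbb{R}$ by $f(0)=0$ and, for each $n\in\mathbb{N}$ (with $\mathbb{N}=\{1,2,\dots\}$), $$f(t)=\begin{cases}\frac{1}{n+1}-(2n+1)\left(t-\frac{1}{n+1}\right), & t\in\left[\frac{1}{n+1},\frac{2}{2n+1}\right],\\ (2n+1)\left(t-\frac{2}{2n+1}\right), & t\in\left[\frac{2}{2n+1},\frac1n\right].\end{cases}$$ Then $f$ is well defined and continuous, $\sup\{|f(x)-f(y)|:x,y\in[0,1]\}=1$, and the function $\delta:[0,1)\to[0,\infty)$, $\delta(\epsilon)=\inf\{|x-y| : x,y\in[0,1],\ |f(x)-f(y)|\ge\epsilon\}$, satisfies, for every integer $n\ge 2$, $$\delta(1/n)=\frac{1}{n(2n+1)}<\frac{1}{n(2n-1)}\le\delta(\epsilon)\quad\text{for all }\epsilon\in(1/n,1).$$ In particular $\delta$ is discontinuous at each point $1/n$, $n\ge2$. *)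

From Stdlib Require Import Reals Lra ClassicalEpsilon.
Open Scope R_scope.

Definition spec_f (f : R -> R) : Prop :=
  f 0 = 0 /\
  forall n : nat, (1 <= n)%nat ->
    (forall t, / (INR n + 1) <= t <= 2 / (2 * INR n + 1) ->
       f t = / (INR n + 1) - (2 * INR n + 1) * (t - / (INR n + 1))) /\
    (forall t, 2 / (2 * INR n + 1) <= t <= / INR n ->
       f t = (2 * INR n + 1) * (t - 2 / (2 * INR n + 1))).

Definition unit_interval (x : R) : Prop := 0 <= x <= 1.

Definition osc_set (f : R -> R) (s : R) : Prop :=
  exists x y, unit_interval x /\ unit_interval y /\ s = Rabs (f x - f y).

Definition dist_set (f : R -> R) (eps : R) (d : R) : Prop :=
  exists x y, unit_interval x /\ unit_interval y /\
    Rabs (f x - f y) >= eps /\ d = Rabs (x - y).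

Definition is_glb (E : R -> Prop) (m : R) : Prop :=
  (forall x, E x -> m <= x) /\ (forall b, (forall x, E x -> b <= x) -> b <= m).

(* delta(eps) = inf dist_set f eps (chosen by Hilbert's epsilon; meaningful
   whenever the infimum exists, which the theorem asserts for eps in [0,1)). *)
Definition delta (f : R -> R) (eps : R) : R :=
  epsilon (inhabits 0) (fun m => is_glb (dist_set f eps) m).

(* On each piece [1/(n+1), 1/n] (n >= 1) the function f of the statement is the
   tent |(2n+1) t - 2|: it falls from 1/(n+1) to 0 at 2/(2n+1) and rises back
   to 1/n with slope 2n+1.  Neighbouring tents agree at the common endpoint,
   which gives existence (choose any piece containing t) and uniqueness.
   Since 0 <= f t <= t and f is (2N-1)-Lipschitz on [1/N, 1], f is continuous,
   f 0 = 0 and f 1 = 1 give oscillation 1, and delta is a well-defined infimum.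

   The values of delta come from one estimate (dist_set_lower_bound): if f is
   L-Lipschitz on [c, 1] and f t >= e forces t >= p, then two points whose
   values differ by e are at least min(p - c, e / L) apart.  For e = 1/n
   (c = 1/(n+1), p = 1/n, L = 2n+1) this gives 1/(n(2n+1)), attained by the
   pair 2/(2n+1), 1/n.  For e > 1/n the peak bound f t > 1/n -> t >= 2/(2n-1)
   (c = 1/n, p = 2/(2n-1), L = 2n-1) gives 1/(n(2n-1)). *)

From Stdlib Require Import Reals Lra Lia ClassicalEpsilon.
Open Scope R_scope.

Lemma le_div_iff (a t c : R) : 0 < a -> (t <= c / a <-> a * t <= c).
Proof.
  intros Ha; split; intros H.
  - apply (Rmult_le_compat_l a) in H; [|lra].
    replace (a * (c / a)) with c in H by (field; lra); exact H.
  - apply (Rmult_le_reg_l a); [exact Ha|].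
    replace (a * (c / a)) with c by (field; lra); exact H.
Qed.

Lemma div_le_iff (a t c : R) : 0 < a -> (c / a <= t <-> c <= a * t).
Proof.
  intros Ha; split; intros H.
  - apply (Rmult_le_compat_l a) in H; [|lra].
    replace (a * (c / a)) with c in H by (field; lra); exact H.
  - apply (Rmult_le_reg_l a); [exact Ha|].
    replace (a * (c / a)) with c by (field; lra); exact H.
Qed.

Lemma le_inv_iff (a t : R) : 0 < a -> (t <= / a <-> a * t <= 1).
Proof. intros Ha; rewrite <- Rdiv_1_l; exact (le_div_iff a t 1 Ha). Qed.

Lemma inv_le_iff (a t : R) : 0 < a -> (/ a <= t <-> 1 <= a * t).
Proof. intros Ha; rewrite <- Rdiv_1_l; exact (div_le_iff a t 1 Ha). Qed.

Definition lipschitz_on (g : R -> R) (a b L : R) : Prop :=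
  forall x y, a <= x <= b -> a <= y <= b -> Rabs (g x - g y) <= L * Rabs (x - y).

Lemma lipschitz_on_mono g a b L L' :
  L <= L' -> lipschitz_on g a b L -> lipschitz_on g a b L'.
Proof.
  intros HL Hg x y Hx Hy.
  pose proof (Hg x y Hx Hy); pose proof (Rabs_pos (x - y)); nra.
Qed.

(* Lipschitz bounds on two adjacent intervals glue, by the triangle
   inequality through the common endpoint. *)
Lemma lipschitz_on_glue g a c b L : a <= c <= b -> 0 <= L ->
  lipschitz_on g a c L -> lipschitz_on g c b L -> lipschitz_on g a b L.
Proof.
  intros Hc HL Hl Hr.
  assert (across : forall x y, a <= x <= c -> c <= y <= b ->
            Rabs (g x - g y) <= L * Rabs (x - y)).
  { intros x y Hx Hy.
    pose proof (Hl x c Hx ltac:(lra)) as Hxc.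
    pose proof (Hr c y ltac:(lra) Hy) as Hcy.
    pose proof (Rabs_triang (g x - g c) (g c - g y)) as Htri.
    replace (g x - g c + (g c - g y)) with (g x - g y) in Htri by ring.
    rewrite (Rabs_left1 (x - c)) in Hxc by lra.
    rewrite (Rabs_left1 (c - y)) in Hcy by lra.
    rewrite (Rabs_left1 (x - y)) by lra. lra. }
  intros x y Hx Hy.
  destruct (Rle_dec x c), (Rle_dec y c).
  - apply Hl; lra.
  - apply across; lra.
  - rewrite Rabs_minus_sym, (Rabs_minus_sym x). apply across; lra.
  - apply Hr; lra.
Qed.

Lemma lipschitz_continue_in g a b L (D : R -> Prop) x : 0 <= L ->
  lipschitz_on g a b L -> (forall y, D y -> y <= b) -> a < x <= b ->
  continue_in g D x.
Proof.
  intros HL Hg HD Hx eps Heps. simpl; unfold R_dist.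
  exists (Rmin (x - a) (eps / (L + 1))). split.
  { apply Rmin_pos; [lra|]. apply Rdiv_lt_0_compat; lra. }
  intros y [[Hy _] Hyx].
  pose proof (Rmin_l (x - a) (eps / (L + 1))).
  pose proof (Rmin_r (x - a) (eps / (L + 1))).
  apply Rabs_def2 in Hyx as Hyx'.
  pose proof (HD y Hy).
  pose proof (Hg y x ltac:(lra) ltac:(lra)) as Hl.
  assert (Hd : Rabs (y - x) < eps / (L + 1)) by lra.
  apply (Rmult_lt_compat_l (L + 1)) in Hd; [|lra].
  replace ((L + 1) * (eps / (L + 1))) with eps in Hd by (field; lra).
  pose proof (Rabs_pos (y - x)). nra.
Qed.

Lemma is_glb_min (E : R -> Prop) m : E m -> (forall x, E x -> m <= x) -> is_glb E m.
Proof. intros Hm Hlow; split; [exact Hlow|]. intros b Hb; exact (Hb m Hm). Qed.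

Lemma glb_unique (E : R -> Prop) m1 m2 : is_glb E m1 -> is_glb E m2 -> m1 = m2.
Proof. intros [A B] [C D]; apply Rle_antisym; [apply D | apply B]; assumption. Qed.

Lemma glb_exists (E : R -> Prop) :
  (exists x, E x) -> (exists b, forall x, E x -> b <= x) -> exists m, is_glb E m.
Proof.
  intros [x0 Hx0] [b Hb].
  destruct (completeness (fun z => E (- z))) as [m [Hup Hleast]].
  - exists (- b). intros z Hz. pose proof (Hb _ Hz); lra.
  - exists (- x0). rewrite Ropp_involutive; exact Hx0.
  - exists (- m). split.
    + intros x Hx. assert (- x <= m) by (apply Hup; rewrite Ropp_involutive; exact Hx). lra.
    + intros c Hc. assert (m <= - c) by (apply Hleast; intros z Hz; pose proof (Hc _ Hz); lra). lra.
Qed.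

Lemma jump_discontinuous (g : R -> R) c r b : 0 < r -> g c < b ->
  (forall e, c < e < c + r -> b <= g e) -> ~ continuity_pt g c.
Proof.
  intros Hr Hgc Hjump Hcont.
  destruct (Hcont (b - g c) ltac:(lra)) as [alpha [Halpha Hnear]].
  set (e := c + Rmin (alpha / 2) (r / 2)).
  pose proof (Rmin_l (alpha / 2) (r / 2)); pose proof (Rmin_r (alpha / 2) (r / 2)).
  assert (0 < Rmin (alpha / 2) (r / 2)) by (apply Rmin_pos; lra).
  assert (Hge : b <= g e) by (apply Hjump; unfold e; lra).
  assert (Hlt : R_dist (g e) (g c) < b - g c).
  { apply Hnear. split; [split; [exact I|unfold e; lra]|].
    simpl; unfold R_dist, e. rewrite Rabs_right; lra. }
  unfold R_dist in Hlt. apply Rabs_def2 in Hlt. lra.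
Qed.

Lemma INR_ge1 (n : nat) : (1 <= n)%nat -> 1 <= INR n.
Proof. intros H; apply le_INR in H; exact H. Qed.

(* t lies in the n-th piece [1/(n+1), 1/n], in multiplicative form. *)
Definition piece (n : nat) (t : R) : Prop :=
  1 <= (INR n + 1) * t /\ INR n * t <= 1.

Definition tent (n : nat) (t : R) : R := Rabs ((2 * INR n + 1) * t - 2).

Lemma piece_iff n t : (1 <= n)%nat ->
  (/ (INR n + 1) <= t <= / INR n <-> piece n t).
Proof.
  intros Hn; pose proof (INR_ge1 n Hn); unfold piece.
  rewrite inv_le_iff, le_inv_iff by lra; tauto.
Qed.

(* The pieces cover (0, 1]: descend from a piece near 0 to the one containing t. *)
Lemma piece_cover t : 0 < t <= 1 -> exists n, (1 <= n)%nat /\ piece n t.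
Proof.
  intros Ht.
  assert (descend : forall N, / (INR N + 1) <= t -> exists n, (1 <= n)%nat /\ piece n t).
  { induction N as [|N IH]; intros HN.
    - exists 1%nat; split; [lia|]. unfold piece; simpl in *; lra.
    - destruct (Rle_dec (/ (INR N + 1)) t) as [H|H]; [exact (IH H)|].
      exists (S N); split; [lia|]. apply piece_iff; [lia|]. rewrite S_INR in *; lra. }
  destruct (INR_unbounded (/ t)) as [N HN]. apply (descend N).
  apply inv_le_iff; [pose proof (pos_INR N); lra|].
  apply (Rmult_lt_compat_r t) in HN; [|lra]. rewrite Rinv_l in HN by lra. nra.
Qed.

(* Two pieces overlap only at a common endpoint 1/(n+1), where both tents
   take the value 1/(n+1); so the tent description of f is consistent. *)
Lemma tent_agree n m t : (1 <= n)%nat -> (1 <= m)%nat ->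
  piece n t -> piece m t -> tent n t = tent m t.
Proof.
  assert (adjacent : forall n m t, (1 <= n)%nat -> (n < m)%nat ->
            piece n t -> piece m t -> tent n t = tent m t).
  { clear. intros n m t Hn Hnm [A1 A2] [B1 B2]; unfold tent.
    pose proof (INR_ge1 n Hn).
    assert (INR n + 1 <= INR m) by (rewrite <- S_INR; apply le_INR; lia).
    assert (Hm : INR m = INR n + 1) by nra.
    assert ((INR n + 1) * t = 1) by nra.
    rewrite Hm, Rabs_left1, Rabs_right by nra. nra. }
  intros Hn Hm Pn Pm. destruct (Nat.lt_trichotomy n m) as [h|[h|h]].
  - exact (adjacent n m t Hn h Pn Pm).
  - subst; reflexivity.
  - symmetry; exact (adjacent m n t Hm h Pm Pn).
Qed.

Lemma tent_left n t : (1 <= n)%nat -> (2 * INR n + 1) * t <= 2 ->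
  tent n t = / (INR n + 1) - (2 * INR n + 1) * (t - / (INR n + 1)).
Proof.
  intros Hn Ht; pose proof (INR_ge1 n Hn); unfold tent.
  rewrite Rabs_left1 by lra. field; lra.
Qed.

Lemma tent_right n t : (1 <= n)%nat -> 2 <= (2 * INR n + 1) * t ->
  tent n t = (2 * INR n + 1) * (t - 2 / (2 * INR n + 1)).
Proof.
  intros Hn Ht; pose proof (INR_ge1 n Hn); unfold tent.
  rewrite Rabs_right by lra. field; lra.
Qed.

Lemma piece_midpoint n : (1 <= n)%nat ->
  / (INR n + 1) <= 2 / (2 * INR n + 1) <= / INR n.
Proof.
  intros Hn; pose proof (INR_ge1 n Hn).
  rewrite inv_le_iff, le_inv_iff by lra.
  rewrite !Rmult_div_assoc; split; [apply le_div_iff | apply div_le_iff]; lra.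
Qed.

Lemma spec_f_iff (f : R -> R) : spec_f f <->
  f 0 = 0 /\ forall n t, (1 <= n)%nat -> piece n t -> f t = tent n t.
Proof.
  unfold spec_f; split; intros [H0 Hpieces]; split; try exact H0.
  - intros n t Hn Ht; pose proof (INR_ge1 n Hn).
    pose proof (piece_midpoint n Hn).
    apply piece_iff in Ht; [|exact Hn].
    destruct (Hpieces n Hn) as [Hleft Hright].
    destruct (Rle_dec t (2 / (2 * INR n + 1))) as [Hle|Hgt].
    + rewrite Hleft by lra. symmetry; apply tent_left; [exact Hn|].
      apply le_div_iff; lra.
    + rewrite Hright by lra. symmetry; apply tent_right; [exact Hn|].
      apply div_le_iff; lra.
  - intros n Hn; pose proof (INR_ge1 n Hn).
    pose proof (piece_midpoint n Hn).
    split; intros t Ht; rewrite (Hpieces n t Hn) by (apply piece_iff; [exact Hn|lra]).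
    + apply tent_left; [exact Hn|]. apply le_div_iff; lra.
    + apply tent_right; [exact Hn|]. apply div_le_iff; lra.
Qed.

Definition piece_index (t : R) : nat :=
  epsilon (inhabits 0%nat) (fun n => (1 <= n)%nat /\ piece n t).

Definition zigzag (t : R) : R :=
  if Rle_dec t 0 then 0 else tent (piece_index t) t.

Lemma zigzag_spec : spec_f zigzag.
Proof.
  apply spec_f_iff; split.
  - unfold zigzag; destruct (Rle_dec 0 0); [reflexivity|lra].
  - intros n t Hn Ht.
    assert (Hpos : 0 < t) by (destruct Ht; pose proof (pos_INR n); nra).
    unfold zigzag; destruct (Rle_dec t 0) as [Hle|_]; [lra|].
    assert (Hidx : (1 <= piece_index t)%nat /\ piece (piece_index t) t).
    { unfold piece_index; apply epsilon_spec; exists n; split; assumption. }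
    destruct Hidx as [Hk Hkt]. exact (tent_agree _ _ _ Hk Hn Hkt Ht).
Qed.

Section ZigzagProperties.

Variable f : R -> R.
Hypothesis Hf : spec_f f.

Lemma f_zero : f 0 = 0.
Proof. exact (proj1 (proj1 (spec_f_iff f) Hf)). Qed.

Lemma f_piece n t : (1 <= n)%nat -> piece n t -> f t = tent n t.
Proof. exact (proj2 (proj1 (spec_f_iff f) Hf) n t). Qed.

Lemma f_bounds t : unit_interval t -> 0 <= f t <= t.
Proof.
  intros Ht. destruct (Req_dec t 0) as [->|Hnz]; [rewrite f_zero; lra|].
  destruct (piece_cover t) as [n [Hn Hnt]]; [unfold unit_interval in Ht; lra|].
  rewrite (f_piece n t Hn Hnt). pose proof (INR_ge1 n Hn). destruct Hnt.
  unfold tent; split; [apply Rabs_pos|]. apply Rabs_le; nra.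
Qed.

Lemma f_one : f 1 = 1.
Proof.
  assert (H1 : piece 1 1) by (unfold piece; simpl; lra).
  rewrite (f_piece 1 1 (le_n 1) H1).
  unfold tent; simpl; rewrite Rabs_right; lra.
Qed.

(* On the n-th piece f is a tent of slope 2n+1. *)
Lemma lipschitz_piece n : (1 <= n)%nat ->
  lipschitz_on f (/ (INR n + 1)) (/ INR n) (2 * INR n + 1).
Proof.
  intros Hn x y Hx Hy. pose proof (INR_ge1 n Hn).
  rewrite (f_piece n x Hn), (f_piece n y Hn) by (apply piece_iff; assumption).
  unfold tent.
  replace ((2 * INR n + 1) * Rabs (x - y))
    with (Rabs ((2 * INR n + 1) * x - 2 - ((2 * INR n + 1) * y - 2))).
  - apply Rabs_triang_inv2.
  - replace ((2 * INR n + 1) * x - 2 - ((2 * INR n + 1) * y - 2))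
      with ((2 * INR n + 1) * (x - y)) by ring.
    rewrite Rabs_mult, (Rabs_right (2 * INR n + 1)) by lra. reflexivity.
Qed.

(* Gluing the pieces n < N: on [1/N, 1] the steepest slope is 2N - 1. *)
Lemma lipschitz_tail N : (2 <= N)%nat ->
  lipschitz_on f (/ INR N) 1 (2 * INR N - 1).
Proof.
  intros HN. induction HN as [|N HN IH].
  - intros x y Hx Hy.
    pose proof (lipschitz_piece 1 (le_n 1) x y) as H1; simpl in *.
    rewrite Rinv_1 in H1. replace (2 * (1 + 1) - 1) with (2 * 1 + 1) by ring.
    apply H1; lra.
  - assert (HN1 : 2 <= INR N) by (apply le_INR in HN; exact HN).
    rewrite S_INR.
    apply lipschitz_on_glue with (/ INR N); [|lra| |].
    + rewrite <- Rinv_1. split; apply Rinv_le_contravar; lra.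
    + replace (2 * (INR N + 1) - 1) with (2 * INR N + 1) by ring.
      apply lipschitz_piece; lia.
    + apply lipschitz_on_mono with (2 * INR N - 1); [lra|exact IH].
Qed.

(* Continuity at 0 by the squeeze 0 <= f t <= t, elsewhere by the Lipschitz
   bound on a tail [1/N, 1] containing x in its interior. *)
Lemma f_continuous x : unit_interval x -> continue_in f unit_interval x.
Proof.
  intros Hx. destruct (Req_dec x 0) as [->|Hnz].
  - intros eps Heps. exists eps; split; [exact Heps|].
    intros y [[Hy _] Hyx]. simpl in *; unfold R_dist in *.
    pose proof (f_bounds y Hy). rewrite f_zero, Rminus_0_r in *.
    unfold unit_interval in Hy. rewrite Rabs_right in * by lra. lra.
  - destruct (INR_unbounded (/ x)) as [N HN].
    unfold unit_interval in Hx.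
    assert (HN2 : 2 <= INR (S (S N))) by (rewrite !S_INR; pose proof (pos_INR N); lra).
    apply lipschitz_continue_in with (/ INR (S (S N))) 1 (2 * INR (S (S N)) - 1).
    + lra.
    + apply lipschitz_tail; lia.
    + intros y Hy; exact (proj2 Hy).
    + split; [|lra].
      assert (Hxx : / x * x = 1) by (field; exact Hnz).
      apply (Rmult_lt_reg_l (INR (S (S N)))); [lra|].
      rewrite Rinv_r by lra. rewrite !S_INR in *. nra.
Qed.

(* The values of f lie in [0, 1] and f 1 - f 0 = 1. *)
Lemma f_oscillation : is_lub (osc_set f) 1.
Proof.
  split.
  - intros s [x [y [Hx [Hy ->]]]].
    pose proof (f_bounds x Hx); pose proof (f_bounds y Hy).
    unfold unit_interval in *. apply Rabs_le; lra.
  - intros b Hb. apply Hb. exists 1, 0. unfold unit_interval.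
    rewrite f_one, f_zero, Rminus_0_r, Rabs_R1. repeat split; lra.
Qed.

(* For eps < 1 the pair (1, 0) lies in the distance set, which is bounded
   below by 0, so delta f eps is its infimum. *)
Lemma delta_is_glb eps : 0 <= eps < 1 ->
  is_glb (dist_set f eps) (delta f eps) /\ 0 <= delta f eps.
Proof.
  intros Heps.
  assert (Hglb : is_glb (dist_set f eps) (delta f eps)).
  { unfold delta; apply epsilon_spec, glb_exists.
    - exists 1, 1, 0. unfold unit_interval.
      rewrite f_one, f_zero, Rminus_0_r, Rabs_R1. repeat split; lra.
    - exists 0. intros d [x [y [_ [_ [_ ->]]]]]. apply Rabs_pos. }
  split; [exact Hglb|]. apply (proj2 Hglb).
  intros d [x [y [_ [_ [_ ->]]]]]. apply Rabs_pos.
Qed.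

(* Peak bound: f stays below 1/n before 2/(2n-1), since there it is at most
   t <= 1/n, or on the falling part of the (n-1)-th tent. *)
Lemma f_exceeds_inv n t : (2 <= n)%nat -> unit_interval t -> / INR n < f t ->
  2 / (2 * INR n - 1) <= t.
Proof.
  intros Hn Ht Hft. assert (HN : 2 <= INR n) by (apply le_INR in Hn; exact Hn).
  pose proof (f_bounds t Ht).
  assert (Hnt : 1 < INR n * t).
  { apply (Rmult_lt_compat_l (INR n)) in Hft; [|lra]. rewrite Rinv_r in Hft by lra; nra. }
  apply div_le_iff; [lra|]. apply Rnot_lt_le; intros Hlow.
  assert (Hprev : INR (n - 1) = INR n - 1) by (rewrite minus_INR by lia; simpl; lra).
  assert (Hpiece : piece (n - 1) t) by (unfold piece; rewrite Hprev; nra).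
  rewrite (f_piece (n - 1) t ltac:(lia) Hpiece) in Hft.
  unfold tent in Hft; rewrite Hprev, Rabs_left1 in Hft by lra.
  apply (Rmult_lt_compat_l (INR n)) in Hft; [|lra].
  rewrite Rinv_r in Hft by lra. nra.
Qed.

(* The separation estimate: either one point lies below c, and then the other
   lies beyond p, or both lie in [c, 1], where f is L-Lipschitz. *)
Lemma dist_set_lower_bound c p e L : 0 < L -> lipschitz_on f c 1 L ->
  (forall t, unit_interval t -> e <= f t -> p <= t) ->
  forall d, dist_set f e d -> Rmin (p - c) (e / L) <= d.
Proof.
  intros HL Hlip Hpeak.
  assert (low : forall x y, unit_interval x -> unit_interval y ->
            Rabs (f x - f y) >= e -> x < c -> p - c <= Rabs (x - y)).
  { intros x y Hx Hy Hgap Hxc.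
    pose proof (f_bounds x Hx); pose proof (f_bounds y Hy).
    pose proof (Rabs_pos (x - y)).
    assert (y - x <= Rabs (x - y)) by (rewrite Rabs_minus_sym; apply Rle_abs).
    unfold Rabs in Hgap; destruct (Rcase_abs (f x - f y)).
    - pose proof (Hpeak y Hy ltac:(lra)); lra.
    - pose proof (Hpeak x Hx ltac:(lra)); lra. }
  intros d [x [y [Hx [Hy [Hgap ->]]]]].
  destruct (Rlt_dec x c) as [Hxc|Hxc].
  { apply Rle_trans with (p - c); [apply Rmin_l|exact (low x y Hx Hy Hgap Hxc)]. }
  destruct (Rlt_dec y c) as [Hyc|Hyc].
  { rewrite Rabs_minus_sym in Hgap |- *.
    apply Rle_trans with (p - c); [apply Rmin_l|exact (low y x Hy Hx Hgap Hyc)]. }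
  apply Rle_trans with (e / L); [apply Rmin_r|].
  apply div_le_iff; [exact HL|].
  unfold unit_interval in *. pose proof (Hlip x y ltac:(lra) ltac:(lra)). lra.
Qed.

(* The zero 2/(2n+1) and the peak 1/n of the n-th tent realise the gap 1/n
   at distance 1/(n(2n+1)). *)
Lemma tent_gap_pair n : (1 <= n)%nat ->
  dist_set f (/ INR n) (/ (INR n * (2 * INR n + 1))).
Proof.
  intros Hn. pose proof (INR_ge1 n Hn) as HN.
  pose proof (piece_midpoint n Hn) as Hmid.
  assert (Hpeak : piece n (/ INR n)) by (apply piece_iff; [exact Hn|lra]).
  assert (Hzero : piece n (2 / (2 * INR n + 1))) by (apply piece_iff; [exact Hn|lra]).
  exists (2 / (2 * INR n + 1)), (/ INR n). unfold unit_interval.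
  rewrite (f_piece n _ Hn Hzero), (f_piece n _ Hn Hpeak). unfold tent.
  replace ((2 * INR n + 1) * (2 / (2 * INR n + 1)) - 2) with 0 by (field; lra).
  replace ((2 * INR n + 1) * / INR n - 2) with (/ INR n) by (field; lra).
  replace (2 / (2 * INR n + 1) - / INR n) with (- / (INR n * (2 * INR n + 1)))
    by (field; lra).
  assert (0 < / INR n <= 1) by (split; [apply Rinv_0_lt_compat|rewrite <- Rinv_1;
    apply Rinv_le_contravar]; lra).
  assert (0 < / (INR n + 1)) by (apply Rinv_0_lt_compat; lra).
  assert (0 < / (INR n * (2 * INR n + 1))) by (apply Rinv_0_lt_compat; nra).
  rewrite Rabs_R0, Rminus_0_l, !Rabs_Ropp, !(Rabs_right (/ INR n)),
    (Rabs_right (/ (INR n * (2 * INR n + 1)))) by lra.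
  repeat split; lra.
Qed.

(* Lower bound 1/(n(2n+1)) from the separation estimate with c = 1/(n+1),
   p = 1/n (as f t <= t) and L = 2n+1; it is attained by tent_gap_pair. *)
Lemma delta_at_inv n : (2 <= n)%nat ->
  delta f (/ INR n) = / (INR n * (2 * INR n + 1)).
Proof.
  intros Hn. assert (HN : 2 <= INR n) by (apply le_INR in Hn; exact Hn).
  assert (Hinv : / INR n < 1) by (rewrite <- Rinv_1; apply Rinv_lt_contravar; lra).
  assert (0 < / INR n) by (apply Rinv_0_lt_compat; lra).
  apply glb_unique with (dist_set f (/ INR n)); [apply delta_is_glb; lra|].
  apply is_glb_min; [apply tent_gap_pair; lia|].
  pose proof (lipschitz_tail (S n) ltac:(lia)) as Hlip.
  rewrite S_INR in Hlip.
  replace (2 * (INR n + 1) - 1) with (2 * INR n + 1) in Hlip by ring.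
  intros d Hd. eapply Rle_trans;
    [|apply (dist_set_lower_bound (/ (INR n + 1)) (/ INR n) (/ INR n)
              (2 * INR n + 1) ltac:(lra) Hlip); [|exact Hd]].
  - apply Rmin_glb.
    + replace (/ INR n - / (INR n + 1)) with (/ (INR n * (INR n + 1))) by (field; lra).
      apply Rinv_le_contravar; nra.
    + right; field; lra.
  - intros t Ht Hft. pose proof (f_bounds t Ht); lra.
Qed.

(* Above 1/n: the separation estimate with c = 1/n, p = 2/(2n-1), L = 2n-1. *)
Lemma delta_above_inv n eps : (2 <= n)%nat -> / INR n < eps < 1 ->
  / (INR n * (2 * INR n - 1)) <= delta f eps.
Proof.
  intros Hn Heps. assert (HN : 2 <= INR n) by (apply le_INR in Hn; exact Hn).
  assert (0 < / INR n) by (apply Rinv_0_lt_compat; lra).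
  apply (proj2 (proj1 (delta_is_glb eps ltac:(lra)))).
  intros d Hd. eapply Rle_trans;
    [|apply (dist_set_lower_bound (/ INR n) (2 / (2 * INR n - 1)) eps
               (2 * INR n - 1) ltac:(lra)
               (lipschitz_tail n Hn)); [|exact Hd]].
  - apply Rmin_glb.
    + right; field; lra.
    + apply le_div_iff; [lra|].
      replace ((2 * INR n - 1) * / (INR n * (2 * INR n - 1))) with (/ INR n)
        by (field; lra). lra.
  - intros t Ht Hft. apply f_exceeds_inv; [exact Hn|exact Ht|lra].
Qed.

End ZigzagProperties.

(* Uniqueness on [0, 1]: both functions equal the same tent on each piece. *)
Lemma spec_f_unique (f g : R -> R) : spec_f f -> spec_f g ->
  forall t, unit_interval t -> f t = g t.
Proof.
  intros Hf Hg t Ht. destruct (Req_dec t 0) as [->|Hnz].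
  - rewrite (f_zero f Hf), (f_zero g Hg); reflexivity.
  - destruct (piece_cover t) as [n [Hn Hnt]]; [unfold unit_interval in Ht; lra|].
    rewrite (f_piece f Hf n t Hn Hnt), (f_piece g Hg n t Hn Hnt); reflexivity.
Qed.

Theorem mainTheorem5 :
  (exists f : R -> R, spec_f f) /\
  (forall f g : R -> R, spec_f f -> spec_f g ->
     forall t, unit_interval t -> f t = g t) /\
  (forall f : R -> R, spec_f f ->
     (forall x, unit_interval x -> continue_in f unit_interval x) /\
     is_lub (osc_set f) 1 /\
     (forall eps, 0 <= eps < 1 ->
        is_glb (dist_set f eps) (delta f eps) /\ 0 <= delta f eps) /\
     (forall n : nat, (2 <= n)%nat ->
        delta f (/ INR n) = / (INR n * (2 * INR n + 1)) /\
        / (INR n * (2 * INR n + 1)) < / (INR n * (2 * INR n - 1)) /\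
        (forall eps, / INR n < eps < 1 ->
           / (INR n * (2 * INR n - 1)) <= delta f eps) /\
        ~ continuity_pt (delta f) (/ INR n))).
Proof.
  split; [exists zigzag; exact zigzag_spec|].
  split; [exact spec_f_unique|].
  intros f Hf.
  split; [exact (f_continuous f Hf)|].
  split; [exact (f_oscillation f Hf)|].
  split; [exact (delta_is_glb f Hf)|].
  intros n Hn. assert (HN : 2 <= INR n) by (apply le_INR in Hn; exact Hn).
  assert (Hgap : / (INR n * (2 * INR n + 1)) < / (INR n * (2 * INR n - 1)))
    by (apply Rinv_lt_contravar; [apply Rmult_lt_0_compat|]; nra).
  assert (Habove : forall eps, / INR n < eps < 1 ->
            / (INR n * (2 * INR n - 1)) <= delta f eps)
    by (intros eps Heps; exact (delta_above_inv f Hf n eps Hn Heps)).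
  split; [exact (delta_at_inv f Hf n Hn)|].
  split; [exact Hgap|].
  split; [exact Habove|].
  apply (jump_discontinuous (delta f) (/ INR n) (1 - / INR n)
           (/ (INR n * (2 * INR n - 1)))).
  - assert (/ INR n < 1) by (rewrite <- Rinv_1; apply Rinv_lt_contravar; lra).
    lra.
  - rewrite (delta_at_inv f Hf n Hn); exact Hgap.
  - intros eps Heps; apply Habove; lra.
Qed.
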